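(* Let $q_1,t_1,q_2,t_2,v$ be indeterminates (or complex numbers in the region of convergence of all series below). Define $$T_1:=\frac{(v)_\infty}{(vq_1q_2)_\infty}\sum_{i=0}^\infty t_1^i\frac{(vq_1)_i}{(v)_i}\sum_{j=i+1}^\infty t_2^j\frac{(vq_1q_2)_j}{(vq_1)_j},$$ $$T_2:=\frac{(v)_\infty}{(vq_1q_2)_\infty}\sum_{i=0}^\infty t_2^i\frac{(vq_2)_i}{(v)_i}\sum_{j=i+1}^\infty t_1^j\frac{(vq_1q_2)_j}{(vq_2)_j},$$ $$T_3:=\frac{(v)_\infty}{(vq_1q_2)_\infty}\sum_{i=0}^\infty (t_1t_2)^i\frac{(vq_1q_2)_i}{(v)_i}.$$ Then $$\big\langle \widehat B_\lambda(q_1,t_1)\,\widehat B_\lambda(q_2,t_2)\big\rangle_v=(1-q_1)^{-1}(1-q_2)^{-1}(T_1+T_2+T_3).$$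
   Context: Notation: $(a)_0=1$, $(a)_r=\prod_{k=0}^{r-1}(1-av^k)$, $(a)_\infty=\prod_{k\ge0}(1-av^k)$. For a partition $\lambda=(\lambda_1,\lambda_2,\ldots)$ (with $\lambda_i=0$ beyond its length), $\widehat B_\lambda(q,t)=\frac1{1-q}\sum_{i\ge1}t^{i-1}q^{\lambda_i}$. For a function $f$ on the set $\mathcal P$ of partitions, $\langle f\rangle_v:=(v)_\infty\sum_{\lambda\in\mathcal P}f(\lambda)v^{|\lambda|}$. *)

From Stdlib Require Import Reals List Arith Bool ClassicalEpsilon.
From Coquelicot Require Import Coquelicot.
Open Scope C_scope.

Definition csum (a : nat -> C) : C :=
  epsilon (inhabits (RtoC 0)) (fun l => @is_series C_AbsRing C_NormedModule a l).

Definition clim (u : nat -> C) : C :=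
  epsilon (inhabits (RtoC 0)) (fun l => filterlim u eventually (locally l)).

Fixpoint qpoch (a v : C) (r : nat) : C :=
  match r with
  | O => RtoC 1
  | S r' => qpoch a v r' * (RtoC 1 - a * Cpow v r')
  end.

Definition qpoch_inf (a v : C) : C := clim (fun r => qpoch a v r).

(* A partition lambda is represented by the list (lambda_1, lambda_2, ...)
   possibly padded with zeros; lambda_i = nth (i-1) lambda 0. *)

(* B^_lambda(q,t) = 1/(1-q) * sum_{i>=1} t^(i-1) q^(lambda_i) *)
Definition Bhat (lam : list nat) (q t : C) : C :=
  / (RtoC 1 - q) * csum (fun i => Cpow t i * Cpow q (nth i lam 0%nat)).

Fixpoint bounded_lists (n m : nat) : list (list nat) :=
  match n with
  | O => nil :: nil
  | S n' => flat_map (fun l => map (fun x => x :: l) (seq 0 (S m))) (bounded_lists n' m)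
  end.

Fixpoint nonincreasing (l : list nat) : bool :=
  match l with
  | x :: ((y :: _) as l') => Nat.leb y x && nonincreasing l'
  | _ => true
  end.

Definition list_sum (l : list nat) : nat := fold_right Nat.add 0%nat l.

(* The partitions of n, each listed exactly once as a nonincreasing list of
   length n (padded by zeros) with sum n. *)
Definition partitions (n : nat) : list (list nat) :=
  filter (fun l => nonincreasing l && Nat.eqb (list_sum l) n) (bounded_lists n n).

Definition csum_list (l : list C) : C := fold_right Cplus (RtoC 0) l.

(* <f>_v = (v)_oo * sum_{lambda} f(lambda) v^{|lambda|}, the sum over all
   partitions grouped by size |lambda| = n. *)
Definition qavg (f : list nat -> C) (v : C) : C :=
  qpoch_inf v v * csum (fun n => csum_list (map f (partitions n)) * Cpow v n).

Definition T1 (q1 t1 q2 t2 v : C) : C :=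
  qpoch_inf v v / qpoch_inf (v * q1 * q2) v *
  csum (fun i => Cpow t1 i * qpoch (v * q1) v i / qpoch v v i *
    csum (fun k => let j := (k + i + 1)%nat in
            Cpow t2 j * qpoch (v * q1 * q2) v j / qpoch (v * q1) v j)).

Definition T2 (q1 t1 q2 t2 v : C) : C :=
  qpoch_inf v v / qpoch_inf (v * q1 * q2) v *
  csum (fun i => Cpow t2 i * qpoch (v * q2) v i / qpoch v v i *
    csum (fun k => let j := (k + i + 1)%nat in
            Cpow t1 j * qpoch (v * q1 * q2) v j / qpoch (v * q2) v j)).

Definition T3 (q1 t1 q2 t2 v : C) : C :=
  qpoch_inf v v / qpoch_inf (v * q1 * q2) v *
  csum (fun i => Cpow (t1 * t2) i * qpoch (v * q1 * q2) v i / qpoch v v i).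

(* Expanding both factors, B_l(q1,t1) B_l(q2,t2) is (1-q1)^-1 (1-q2)^-1 times the double
   series of t1^i t2^j q1^(l_(i+1)) q2^(l_(j+1)) over i, j >= 0; exchanging summations, the
   average becomes a double series in t1, t2 with coefficients (v)_oo G_ij, where G_ij is
   the sum of q1^(l_(i+1)) q2^(l_(j+1)) v^|l| over all partitions l.  Reading a partition by
   its columns makes this weight multiplicative: a column of height k contributes v^k,
   times q1 if k > i and times q2 if k > j.  Hence G_ij is the product over k >= 1 of
   1 / (1 - q1^[k>i] q2^[k>j] v^k), which multiplied by (vq1q2)_oo is
   (vq1)_i/(v)_i (vq1q2)_j/(vq1)_j for i < j, symmetrically for i > j, and (vq1q2)_i/(v)_i
   for i = j.  Splitting the double series along its diagonal gives T1 + T2 + T3.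
   The column product comes from the recurrence "a partition with at most k + 1 parts has
   at most k parts, or exactly k + 1 and then loses its first column".  Every exchange of
   summations is justified by domination with p(n) |v|^n |t1|^i |t2|^j, the generating
   function of the partition numbers p(n) being bounded by exp (x / (1 - x)^2) through
   the same recurrence. *)

From Stdlib Require Import Reals List Lra Lia Bool ClassicalEpsilon FunctionalExtensionality.
From Coquelicot Require Import Coquelicot.
Open Scope C_scope.

(** * Complex series *)

Notation is_seriesC := (@is_series C_AbsRing C_NormedModule).

(* Equalities produced by Coquelicot's series lemmas live on the carrier of
   [C_NormedModule]; [ring] and [field] only recognise them once restated on [C]. *)
Ltac retype_C := match goal with |- @eq _ ?a ?b => change (@eq C a b) end.

Definition cvC (u : nat -> C) (l : C) : Prop :=
  is_lim_seq (fun n => Cmod (u n - l)) 0%R.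

Lemma cvC_filterlim u l : cvC u l <-> filterlim u eventually (locally l).
Proof.
  unfold cvC. rewrite <- is_lim_seq_spec, filterlim_locally_ball_norm.
  split; intros H eps; specialize (H eps); revert H; apply filter_imp; intros n H;
    unfold ball_norm in *.
  - change (Cmod (u n - l) < eps)%R.
    rewrite Rminus_0_r, Rabs_pos_eq in H by apply Cmod_ge_0. exact H.
  - change (Cmod (u n - l) < eps)%R in H.
    rewrite Rminus_0_r, Rabs_pos_eq by apply Cmod_ge_0. exact H.
Qed.

Lemma cvC_unique u l1 l2 : cvC u l1 -> cvC u l2 -> l1 = l2.
Proof.
  rewrite !cvC_filterlim. intros H1 H2.
  exact (filterlim_locally_unique (F := eventually) u l1 l2 H1 H2).
Qed.

Lemma clim_eq u l : cvC u l -> clim u = l.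
Proof.
  intros H. apply (cvC_unique u); [|exact H]. apply cvC_filterlim.
  apply (epsilon_spec (inhabits (RtoC 0)) (fun l => filterlim u eventually (locally l))).
  exists l. apply cvC_filterlim, H.
Qed.

Lemma is_seriesC_cvC a l : is_seriesC a l <-> cvC (sum_n a) l.
Proof. rewrite cvC_filterlim. reflexivity. Qed.

Lemma csum_eq a l : is_seriesC a l -> csum a = l.
Proof.
  intros H. apply (filterlim_locally_unique (F := eventually) (sum_n a)); [|exact H].
  apply (epsilon_spec (inhabits (RtoC 0)) (fun l => is_seriesC a l)). exists l. exact H.
Qed.

Lemma is_seriesC_csum a : (exists l, is_seriesC a l) -> is_seriesC a (csum a).
Proof. intros [l H]. rewrite (csum_eq _ _ H). exact H. Qed.

Lemma csum_ext (a b : nat -> C) : (forall n, a n = b n) -> csum a = csum b.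
Proof. intros H. f_equal. apply functional_extensionality, H. Qed.

Lemma cvC_ext_eventually u w l N :
  (forall n, (N <= n)%nat -> u n = w n) -> cvC u l -> cvC w l.
Proof.
  unfold cvC. intros E H. rewrite <- is_lim_seq_spec in *. intros eps.
  destruct (H eps) as [M HM]. exists (max N M). intros n Hn.
  rewrite <- E by lia. apply HM. lia.
Qed.

Lemma cvC_const c : cvC (fun _ => c) c.
Proof.
  unfold cvC. eapply is_lim_seq_ext; [|apply is_lim_seq_const].
  intros n. simpl. replace (c - c) with (RtoC 0) by ring. rewrite Cmod_0. reflexivity.
Qed.

Lemma cvC_squeeze u l (b : nat -> R) :
  (forall n, Cmod (u n - l) <= b n)%R -> is_lim_seq b 0%R -> cvC u l.
Proof.
  intros H Hb.
  apply is_lim_seq_le_le with (u := fun _ => 0%R) (w := b); [|apply is_lim_seq_const|exact Hb].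
  intros n. split; [apply Cmod_ge_0|apply H].
Qed.

Lemma cvC_plus u w lu lw : cvC u lu -> cvC w lw -> cvC (fun n => u n + w n) (lu + lw).
Proof.
  intros Hu Hw. apply cvC_squeeze with (b := fun n => (Cmod (u n - lu) + Cmod (w n - lw))%R).
  - intros n. replace (u n + w n - (lu + lw)) with ((u n - lu) + (w n - lw)) by ring.
    apply Cmod_triangle.
  - replace 0%R with (0 + 0)%R by ring. apply (is_lim_seq_plus' _ _ 0%R 0%R); assumption.
Qed.

Lemma cvC_mult u w lu lw : cvC u lu -> cvC w lw -> cvC (fun n => u n * w n) (lu * lw).
Proof.
  intros Hu Hw.
  apply cvC_squeeze with
    (b := fun n => (Cmod (u n - lu) * (Cmod (w n - lw) + Cmod lw) + Cmod lu * Cmod (w n - lw))%R).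
  - intros n.
    replace (u n * w n - lu * lw) with ((u n - lu) * ((w n - lw) + lw) + lu * (w n - lw)) by ring.
    eapply Rle_trans; [apply Cmod_triangle|]. rewrite !Cmod_mult.
    apply Rplus_le_compat_r, Rmult_le_compat_l; [apply Cmod_ge_0|apply Cmod_triangle].
  - replace 0%R with (0 * (0 + Cmod lw) + Cmod lu * 0)%R by ring.
    apply is_lim_seq_plus'; apply is_lim_seq_mult'; try assumption; try apply is_lim_seq_const.
    apply is_lim_seq_plus'; [assumption|apply is_lim_seq_const].
Qed.

Lemma cvC_shift1 u l : cvC (fun n => u (S n)) l <-> cvC u l.
Proof. unfold cvC. symmetry. apply (is_lim_seq_incr_1 (fun n => Cmod (u n - l))). Qed.

Lemma cvC_Cmod u l : cvC u l -> is_lim_seq (fun n => Cmod (u n)) (Cmod l).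
Proof.
  intros H. apply cvC_filterlim in H.
  exact (filterlim_comp _ _ _ u norm _ _ _ H (filterlim_norm l)).
Qed.

Lemma is_seriesC_plus a b la lb :
  is_seriesC a la -> is_seriesC b lb -> is_seriesC (fun n => a n + b n) (la + lb).
Proof. exact (is_series_plus a b la lb). Qed.

Lemma is_seriesC_minus a b la lb :
  is_seriesC a la -> is_seriesC b lb -> is_seriesC (fun n => a n - b n) (la - lb).
Proof. exact (is_series_minus a b la lb). Qed.

Lemma is_seriesC_scal_l c a l : is_seriesC a l -> is_seriesC (fun n => c * a n) (c * l).
Proof. exact (is_series_scal c a l). Qed.

Lemma is_seriesC_scal_r c a l : is_seriesC a l -> is_seriesC (fun n => a n * c) (l * c).
Proof.
  intros H. rewrite Cmult_comm. eapply is_series_ext; [|apply (is_seriesC_scal_l c _ _ H)].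
  intros n. apply Cmult_comm.
Qed.

Lemma is_seriesC_zero : is_seriesC (fun _ => RtoC 0) (RtoC 0).
Proof.
  apply is_seriesC_cvC. eapply cvC_ext_eventually with (N := 0%nat); [|apply cvC_const].
  intros n _. induction n; [symmetry; apply sum_O|].
  rewrite sum_Sn, <- IHn. change (RtoC 0 = RtoC 0 + RtoC 0). ring.
Qed.

Lemma csum_scal (c : C) a l : is_seriesC a l -> csum (fun n => c * a n) = c * l.
Proof. intros H. apply csum_eq, is_seriesC_scal_l, H. Qed.

Lemma csum_scal_inv (c : C) a b :
  c <> 0 -> (forall n, a n = c * b n) -> (exists l, is_seriesC a l) -> csum a = c * csum b.
Proof.
  intros Hc E [l H]. rewrite (csum_eq a l H).
  rewrite (csum_eq b (/ c * l)).
  - rewrite Cmult_assoc, Cinv_r, Cmult_1_l by exact Hc. reflexivity.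
  - eapply is_series_ext; [|apply (is_seriesC_scal_l (/ c) _ _ H)].
    intros n. cbv beta. rewrite E, Cmult_assoc, Cinv_l, Cmult_1_l by exact Hc. reflexivity.
Qed.

Fixpoint fsum (g : nat -> C) (n : nat) : C :=
  match n with O => 0 | S n => fsum g n + g n end.

Fixpoint fsumR (g : nat -> R) (n : nat) : R :=
  match n with O => 0%R | S n => (fsumR g n + g n)%R end.

Lemma sum_n_fsum (g : nat -> C) n : sum_n g n = fsum g (S n).
Proof.
  induction n; [rewrite sum_O; simpl; ring|]. rewrite sum_Sn, IHn. reflexivity.
Qed.

Lemma sum_n_fsumR (g : nat -> R) n : sum_n g n = fsumR g (S n).
Proof.
  induction n; [rewrite sum_O; simpl; ring|]. rewrite sum_Sn, IHn. reflexivity.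
Qed.

Lemma fsum_ext (g h : nat -> C) n : (forall k, (k < n)%nat -> g k = h k) -> fsum g n = fsum h n.
Proof. induction n; simpl; intros E; auto. rewrite IHn, E; auto. Qed.

Lemma fsumR_ext g h n : (forall k, (k < n)%nat -> g k = h k) -> fsumR g n = fsumR h n.
Proof. induction n; simpl; intros E; auto. rewrite IHn, E; auto. Qed.

Lemma fsum_plus (g h : nat -> C) n : fsum (fun k => g k + h k) n = fsum g n + fsum h n.
Proof. induction n; simpl; [|rewrite IHn]; ring. Qed.

Lemma fsum_scal (c : C) (g : nat -> C) n : fsum (fun k => c * g k) n = c * fsum g n.
Proof. induction n; simpl; [|rewrite IHn]; ring. Qed.

Lemma fsum_zero n : fsum (fun _ => 0) n = 0.
Proof. induction n; simpl; [|rewrite IHn]; ring. Qed.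

Lemma fsum_eq0 (g : nat -> C) n : (forall k, (k < n)%nat -> g k = 0) -> fsum g n = 0.
Proof. intros H. rewrite (fsum_ext g (fun _ => 0)) by exact H. apply fsum_zero. Qed.

Lemma fsum_trunc (h : nat -> C) n n' :
  (n' <= n)%nat -> (forall x, (n' <= x < n)%nat -> h x = 0) -> fsum h n = fsum h n'.
Proof.
  intros Hn H. induction Hn; [reflexivity|]. simpl.
  rewrite H by lia. rewrite IHHn by (intros; apply H; lia). ring.
Qed.

Lemma fsum_Cmod (g : nat -> C) n : (Cmod (fsum g n) <= fsumR (fun k => Cmod (g k)) n)%R.
Proof.
  induction n; simpl; [rewrite Cmod_0; lra|].
  eapply Rle_trans; [apply Cmod_triangle|]. lra.
Qed.

Lemma fsumR_le g h n : (forall k, g k <= h k)%R -> (fsumR g n <= fsumR h n)%R.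
Proof. intros H; induction n; simpl; [lra|]. specialize (H n). lra. Qed.

Lemma fsumR_nonneg g n : (forall k, 0 <= g k)%R -> (0 <= fsumR g n)%R.
Proof. intros H; induction n; simpl; [lra|]. specialize (H n). lra. Qed.

Lemma fsumR_mono g n m : (forall k, 0 <= g k)%R -> (n <= m)%nat -> (fsumR g n <= fsumR g m)%R.
Proof. intros H Hnm. induction Hnm; simpl; [lra|]. specialize (H m). lra. Qed.

Lemma fsumR_plus g h n : fsumR (fun k => g k + h k)%R n = (fsumR g n + fsumR h n)%R.
Proof. induction n; simpl; [|rewrite IHn]; ring. Qed.

Lemma fsumR_scal c g n : fsumR (fun k => c * g k)%R n = (c * fsumR g n)%R.
Proof. induction n; simpl; [|rewrite IHn]; ring. Qed.

Lemma fsum_swap (F : nat -> nat -> C) n m :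
  fsum (fun x => fsum (fun y => F x y) n) m = fsum (fun y => fsum (fun x => F x y) m) n.
Proof.
  revert n. induction m; intros n; simpl.
  - symmetry. apply fsum_eq0. reflexivity.
  - rewrite IHm, <- fsum_plus. reflexivity.
Qed.

Lemma fsum_S (h : nat -> C) n : fsum h (S n) = h 0%nat + fsum (fun y => h (S y)) n.
Proof. induction n; simpl in *; [|rewrite IHn]; ring. Qed.

Lemma is_lim_seq_fsumR (b : nat -> R) B : is_series b B -> is_lim_seq (fsumR b) B.
Proof.
  intros H. apply is_lim_seq_incr_1. eapply is_lim_seq_ext; [|exact H].
  intros n. simpl. apply sum_n_fsumR.
Qed.

Lemma is_series_tail_lim (p : nat -> R) T :
  is_series p T -> is_lim_seq (fun N => T - fsumR p N)%R 0%R.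
Proof.
  intros H. apply is_lim_seq_fsumR in H.
  replace (Finite 0%R) with (Rbar_minus T T) by (simpl; f_equal; ring).
  apply is_lim_seq_minus'; [apply is_lim_seq_const|exact H].
Qed.

Lemma is_series_tail (p : nat -> R) (T : R) n :
  is_series p T -> is_series (fun m => p (n + m)%nat) (T - fsumR p n)%R.
Proof.
  intros H. destruct n as [|n].
  - simpl. replace (T - 0)%R with T by ring. exact H.
  - apply is_series_incr_n; [lia|]. simpl pred. rewrite sum_n_fsumR.
    match goal with |- is_series _ ?x => replace x with T by (unfold plus; simpl; ring) end.
    exact H.
Qed.

Lemma fsumR_le_series (g : nat -> R) G n :
  (forall k, 0 <= g k)%R -> is_series g G -> (fsumR g n <= G)%R.
Proof.
  intros Hg H. apply is_lim_seq_fsumR in H.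
  apply (is_lim_seq_le (fun _ => fsumR g n) (fun k => fsumR g (n + k)) (fsumR g n) G).
  - intros k. apply fsumR_mono; [exact Hg|lia].
  - apply is_lim_seq_const.
  - apply (is_lim_seq_incr_n (fsumR g) n) in H.
    eapply is_lim_seq_ext; [|exact H]. intros k. cbv beta. f_equal. lia.
Qed.

Lemma is_seriesC_norm_le (a : nat -> C) (l : C) (b : nat -> R) B :
  is_seriesC a l -> is_series b B -> (forall n, Cmod (a n) <= b n)%R -> (Cmod l <= B)%R.
Proof.
  intros Ha Hb Hab.
  apply is_seriesC_cvC, cvC_Cmod in Ha. apply is_lim_seq_fsumR, is_lim_seq_incr_1 in Hb.
  apply (is_lim_seq_le (fun n => Cmod (sum_n a n)) (fun n => fsumR b (S n)) (Cmod l) B);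
    [|exact Ha|exact Hb].
  intros n. rewrite sum_n_fsum. eapply Rle_trans; [apply fsum_Cmod|]. apply fsumR_le, Hab.
Qed.

Lemma is_seriesC_dominated (a : nat -> C) (b : nat -> R) :
  (forall n, Cmod (a n) <= b n)%R -> ex_series b -> exists l, is_seriesC a l.
Proof. intros H Hb. exact (ex_series_le (V := C_CompleteNormedModule) a b H Hb). Qed.

Lemma is_series_geom_scal (K x : R) :
  (0 <= x < 1)%R -> is_series (fun n => K * x ^ n)%R (K / (1 - x))%R.
Proof.
  intros Hx. apply (is_series_scal_l K (fun n => x ^ n)%R (/ (1 - x))%R), is_series_geom.
  rewrite Rabs_pos_eq; lra.
Qed.

Lemma is_seriesC_geom_dominated (a : nat -> C) (K x : R) :
  (0 <= x < 1)%R -> (forall n, Cmod (a n) <= K * x ^ n)%R -> is_seriesC a (csum a).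
Proof.
  intros Hx H. apply is_seriesC_csum, (is_seriesC_dominated a _ H).
  eexists. apply is_series_geom_scal, Hx.
Qed.

Lemma is_seriesC_of_tail (a : nat -> C) (l : C) n :
  is_seriesC (fun k => a (n + k)%nat) l -> is_seriesC a (fsum a n + l).
Proof.
  revert a l. induction n; intros a l H.
  - simpl. replace (0 + l) with l by ring. exact H.
  - simpl. replace (fsum a n + a n + l) with (fsum a n + (a n + l)) by ring.
    apply IHn, is_series_decr_1.
    match goal with |- is_series _ ?x => replace x with l
      by (rewrite Nat.add_0_r; unfold plus, opp; simpl; ring) end.
    eapply is_series_ext; [|exact H]. intros k. cbv beta. f_equal. lia.
Qed.

Lemma is_seriesC_tail (a : nat -> C) (l : C) n :
  is_seriesC a l -> is_seriesC (fun k => a (n + k)%nat) (l - fsum a n).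
Proof.
  revert a l. induction n; intros a l H.
  - simpl. replace (l - 0) with l by ring. exact H.
  - apply (is_series_ext (fun k => a (n + S k)%nat)); [intros k; f_equal; lia|].
    apply (is_series_incr_1 (fun k => a (n + k)%nat)).
    match goal with |- is_series _ ?x => replace x with (l - fsum a n)
      by (rewrite Nat.add_0_r; unfold plus; simpl; ring) end.
    apply IHn, H.
Qed.

Lemma is_seriesC_fsum (f : nat -> nat -> C) (s : nat -> C) N :
  (forall n, (n < N)%nat -> is_seriesC (f n) (s n)) ->
  is_seriesC (fun m => fsum (fun n => f n m) N) (fsum s N).
Proof.
  induction N; intros H; simpl; [apply is_seriesC_zero|].
  apply is_seriesC_plus; [apply IHN; intros; apply H; lia|apply H; lia].
Qed.

(** * Double series *)

Section DoubleSeries.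
Variables (u : nat -> nat -> C) (al be : nat -> R) (Al Be : R).
Hypothesis u_dom : forall n m, (Cmod (u n m) <= al n * be m)%R.
Hypothesis al_sum : is_series al Al.
Hypothesis be_sum : is_series be Be.

Lemma is_seriesC_row n : is_seriesC (u n) (csum (u n)).
Proof.
  apply is_seriesC_csum, (is_seriesC_dominated _ (fun m => al n * be m)%R); [apply u_dom|].
  eexists. exact (is_series_scal_l _ _ _ be_sum).
Qed.

Lemma is_seriesC_col m : is_seriesC (fun n => u n m) (csum (fun n => u n m)).
Proof.
  apply is_seriesC_csum, (is_seriesC_dominated _ (fun n => al n * be m)%R);
    [intros n; apply u_dom|].
  eexists. exact (is_series_scal_r _ _ _ al_sum).
Qed.

Lemma csum_row_norm_le n : (Cmod (csum (u n)) <= al n * Be)%R.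
Proof.
  eapply is_seriesC_norm_le;
    [apply is_seriesC_row|exact (is_series_scal_l _ _ _ be_sum)|apply u_dom].
Qed.

Lemma csum_col_norm_le m : (Cmod (csum (fun n => u n m)) <= Al * be m)%R.
Proof.
  eapply is_seriesC_norm_le;
    [apply is_seriesC_col|exact (is_series_scal_r _ _ _ al_sum)|intros n; apply u_dom].
Qed.

Lemma is_seriesC_swap :
  is_seriesC (fun n => csum (u n)) (csum (fun m => csum (fun n => u n m))).
Proof.
  set (L := csum (fun m => csum (fun n => u n m))).
  assert (HL : is_seriesC (fun m => csum (fun n => u n m)) L).
  { apply is_seriesC_csum, (is_seriesC_dominated _ (fun m => Al * be m)%R);
      [apply csum_col_norm_le|eexists; exact (is_series_scal_l _ _ _ be_sum)]. }
  apply is_seriesC_cvC.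
  apply cvC_squeeze with (b := fun N => ((Al - fsumR al (S N)) * Be)%R).
  - intros N. rewrite sum_n_fsum.
    (* the difference is the sum over m of the row tails beyond N *)
    assert (Hdiff := is_seriesC_minus _ _ _ _ HL
      (is_seriesC_fsum u (fun n => csum (u n)) (S N) (fun n _ => is_seriesC_row n))).
    replace (fsum (fun n => csum (u n)) (S N) - L)
      with (- (L - fsum (fun n => csum (u n)) (S N))) by ring.
    rewrite Cmod_opp.
    eapply is_seriesC_norm_le; [exact Hdiff|exact (is_series_scal_l _ _ _ be_sum)|].
    intros m. cbv beta.
    eapply is_seriesC_norm_le; [exact (is_seriesC_tail _ _ (S N) (is_seriesC_col m))| |].
    + exact (is_series_scal_r _ _ _ (is_series_tail _ _ (S N) al_sum)).
    + intros n. apply u_dom.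
  - apply (is_lim_seq_incr_1 (fun N => ((Al - fsumR al N) * Be)%R)).
    replace (Finite 0%R) with (Rbar_mult 0%R Be) by (simpl; f_equal; ring).
    apply is_lim_seq_scal_r, is_series_tail_lim, al_sum.
Qed.

End DoubleSeries.

Lemma csum2_swap u al be Al Be :
  (forall n m, Cmod (u n m) <= al n * be m)%R -> is_series al Al -> is_series be Be ->
  csum (fun n => csum (u n)) = csum (fun m => csum (fun n => u n m)).
Proof. intros Hu Ha Hb. apply csum_eq. exact (is_seriesC_swap u al be Al Be Hu Ha Hb). Qed.

Lemma is_seriesC_swap3 (F : nat -> nat -> nat -> C) (a b c : nat -> R) (A B Cs : R) :
  (forall n i j, Cmod (F n i j) <= a n * b i * c j)%R ->
  is_series a A -> is_series b B -> is_series c Cs ->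
  is_seriesC (fun n => csum (fun i => csum (fun j => F n i j)))
    (csum (fun i => csum (fun j => csum (fun n => F n i j)))).
Proof.
  intros HF Ha Hb Hc.
  replace (csum (fun i => csum (fun j => csum (fun n => F n i j))))
    with (csum (fun i => csum (fun n => csum (F n i)))).
  - apply (is_seriesC_swap _ a (fun i => b i * Cs)%R A (B * Cs)%R).
    + intros n i. rewrite <- Rmult_assoc.
      apply (csum_row_norm_le (F n) (fun i => a n * b i)%R c); [intros; apply HF|exact Hc].
    + exact Ha.
    + exact (is_series_scal_r _ _ _ Hb).
  - apply csum_ext. intros i.
    apply (csum2_swap (fun n j => F n i j) a (fun j => b i * c j)%R A (b i * Cs)%R).
    + intros n j. rewrite <- Rmult_assoc. apply HF.
    + exact Ha.
    + exact (is_series_scal_l _ _ _ Hc).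
Qed.

Definition csum_above_diag (X : nat -> nat -> C) : C :=
  csum (fun i => csum (fun k => X i (k + i + 1)%nat)).

Section DiagonalSplit.
Variables (X : nat -> nat -> C) (K a b : R).
Hypothesis Ha : (0 <= a < 1)%R.
Hypothesis Hb : (0 <= b < 1)%R.
Hypothesis HX : forall i j, (Cmod (X i j) <= K * a ^ i * b ^ j)%R.

Let K_nonneg : (0 <= K)%R.
Proof. pose proof (HX 0%nat 0%nat). pose proof (Cmod_ge_0 (X 0%nat 0%nat)). simpl in *. lra. Qed.

Let a_pow_le i : (0 <= a ^ i <= 1)%R.
Proof. split; [apply pow_le; lra|rewrite <- (pow1 i); apply pow_incr; lra]. Qed.

Let b_pow_le j : (0 <= b ^ j <= 1)%R.
Proof. split; [apply pow_le; lra|rewrite <- (pow1 j); apply pow_incr; lra]. Qed.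

Lemma is_seriesC_above_row i :
  is_seriesC (fun k => X i (k + i + 1)%nat) (csum (fun k => X i (k + i + 1)%nat)).
Proof.
  apply (is_seriesC_geom_dominated _ (K * a ^ i * b ^ (i + 1))%R b Hb).
  intros k. eapply Rle_trans; [apply HX|]. right.
  replace (k + i + 1)%nat with (i + 1 + k)%nat by lia. rewrite pow_add. ring.
Qed.

Lemma is_seriesC_below_col j :
  is_seriesC (fun k => X (k + j + 1)%nat j) (csum (fun k => X (k + j + 1)%nat j)).
Proof.
  apply (is_seriesC_geom_dominated _ (K * a ^ (j + 1) * b ^ j)%R a Ha).
  intros k. eapply Rle_trans; [apply HX|]. right.
  replace (k + j + 1)%nat with (j + 1 + k)%nat by lia. rewrite pow_add. ring.
Qed.

Lemma is_seriesC_above_diag :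
  is_seriesC (fun i => csum (fun k => X i (k + i + 1)%nat)) (csum_above_diag X).
Proof.
  apply (is_seriesC_geom_dominated _ (K / (1 - b))%R a Ha). intros i.
  eapply Rle_trans.
  - eapply is_seriesC_norm_le;
      [apply is_seriesC_above_row|apply (is_series_geom_scal (K * a ^ i * b ^ (i + 1)) b Hb)|].
    intros k. eapply Rle_trans; [apply HX|]. right.
    replace (k + i + 1)%nat with (i + 1 + k)%nat by lia. rewrite pow_add. ring.
  - pose proof (a_pow_le i). pose proof (b_pow_le (i + 1)).
    assert (0 < / (1 - b))%R by (apply Rinv_0_lt_compat; lra).
    unfold Rdiv. replace (K * / (1 - b) * a ^ i)%R with (K * a ^ i * 1 * / (1 - b))%R by ring.
    apply Rmult_le_compat_r; [lra|]. apply Rmult_le_compat_l; [|lra]. apply Rmult_le_pos; lra.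
Qed.

Lemma is_seriesC_diag : is_seriesC (fun i => X i i) (csum (fun i => X i i)).
Proof.
  apply (is_seriesC_geom_dominated _ K a Ha). intros i.
  eapply Rle_trans; [apply HX|]. rewrite <- (Rmult_1_r (K * a ^ i)) at 2.
  pose proof (a_pow_le i). pose proof (b_pow_le i).
  apply Rmult_le_compat_l; [apply Rmult_le_pos|]; lra.
Qed.

Lemma is_seriesC_below_diag_partial :
  is_seriesC (fun i => fsum (X i) i) (csum (fun i => fsum (X i) i)).
Proof.
  apply (is_seriesC_geom_dominated _ (K / (1 - b))%R a Ha). intros i.
  eapply Rle_trans; [apply fsum_Cmod|].
  eapply Rle_trans; [apply (fsumR_le _ (fun j => K * a ^ i * b ^ j)%R); intros; apply HX|].
  eapply Rle_trans; [apply fsumR_le_series; [|apply (is_series_geom_scal (K * a ^ i) b Hb)]|].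
  - intros k. pose proof (a_pow_le i). pose proof (b_pow_le k).
    apply Rmult_le_pos; [apply Rmult_le_pos|]; lra.
  - right. unfold Rdiv. ring.
Qed.

Lemma csum_row_split i :
  csum (X i) = fsum (X i) i + X i i + csum (fun k => X i (k + i + 1)%nat).
Proof.
  apply csum_eq. change (fsum (X i) i + X i i) with (fsum (X i) (S i)).
  apply is_seriesC_of_tail. eapply is_series_ext; [|apply is_seriesC_above_row].
  intros k. cbv beta. f_equal. lia.
Qed.

Lemma csum_below_diag : csum (fun i => fsum (X i) i) = csum_above_diag (fun i j => X j i).
Proof.
  set (Y := fun i j => if Nat.ltb j i then X i j else 0).
  assert (HYrow : forall i, csum (Y i) = fsum (X i) i).
  { intros i. apply csum_eq. replace (fsum (X i) i) with (fsum (Y i) i + 0).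
    - apply is_seriesC_of_tail. eapply is_series_ext; [|apply is_seriesC_zero]. intros k. unfold Y.
      destruct (Nat.ltb_spec (i + k) i); [lia|reflexivity].
    - rewrite Cplus_0_r. apply fsum_ext. intros k Hk. unfold Y.
      destruct (Nat.ltb_spec k i); [reflexivity|lia]. }
  assert (HYcol : forall j, csum (fun i => Y i j) = csum (fun k => X (k + j + 1)%nat j)).
  { intros j. apply csum_eq.
    replace (csum (fun k => X (k + j + 1)%nat j))
      with (fsum (fun i => Y i j) (S j) + csum (fun k => X (k + j + 1)%nat j)).
    - apply is_seriesC_of_tail. eapply is_series_ext; [|apply is_seriesC_below_col].
      intros k. unfold Y. destruct (Nat.ltb_spec j (S j + k)); [f_equal; lia|lia].
    - rewrite fsum_eq0; [ring|].
      intros k Hk. unfold Y. destruct (Nat.ltb_spec j k); [lia|reflexivity]. }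
  rewrite <- (csum_ext _ _ HYrow).
  rewrite (csum2_swap Y (fun i => K * a ^ i)%R (fun j => b ^ j)%R (K / (1 - a))%R (/ (1 - b))%R).
  - unfold csum_above_diag. apply csum_ext, HYcol.
  - intros i j. unfold Y. destruct (Nat.ltb j i); [apply HX|].
    rewrite Cmod_0. pose proof (a_pow_le i). pose proof (b_pow_le j).
    apply Rmult_le_pos; [apply Rmult_le_pos|]; lra.
  - apply is_series_geom_scal, Ha.
  - apply is_series_geom. rewrite Rabs_pos_eq; lra.
Qed.

Lemma csum2_split_diag :
  csum (fun i => csum (X i)) =
  csum_above_diag (fun i j => X j i) + csum (fun i => X i i) + csum_above_diag X.
Proof.
  rewrite (csum_ext _ _ csum_row_split), <- csum_below_diag.
  exact (csum_eq _ _ (is_seriesC_plus _ _ _ _ (is_seriesC_plus _ _ _ _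
    is_seriesC_below_diag_partial is_seriesC_diag) is_seriesC_above_diag)).
Qed.

End DiagonalSplit.

(** * Sums over lists and partitions *)

Lemma csum_list_app l1 l2 : csum_list (l1 ++ l2) = csum_list l1 + csum_list l2.
Proof. induction l1; simpl; [|rewrite IHl1]; ring. Qed.

Lemma csum_list_seq (h : nat -> C) n : csum_list (map h (seq 0 n)) = fsum h n.
Proof. induction n; [reflexivity|]. rewrite seq_S, map_app, csum_list_app, IHn. simpl. ring. Qed.

Lemma csum_list_flat_map {A B} (f : B -> C) (g : A -> list B) L :
  csum_list (map f (flat_map g L)) = csum_list (map (fun a => csum_list (map f (g a))) L).
Proof. induction L; simpl; [reflexivity|]. rewrite map_app, csum_list_app, IHL. reflexivity. Qed.

Lemma csum_list_filter {X} (f : X -> C) (p : X -> bool) L :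
  csum_list (map f (filter p L)) = csum_list (map (fun x => if p x then f x else 0) L).
Proof. induction L; simpl; [reflexivity|]. destruct (p a); simpl; rewrite IHL; ring. Qed.

Fixpoint sum_bounded_lists (k m : nat) (f : list nat -> C) : C :=
  match k with
  | O => f nil
  | S k' => sum_bounded_lists k' m (fun l => fsum (fun x => f (x :: l)) (S m))
  end.

Lemma csum_list_bounded_lists k m f :
  csum_list (map f (bounded_lists k m)) = sum_bounded_lists k m f.
Proof.
  revert f. induction k; intros f; [simpl; ring|].
  cbn [bounded_lists sum_bounded_lists].
  rewrite csum_list_flat_map, <- IHk. f_equal. apply map_ext.
  intros l. rewrite map_map. apply (csum_list_seq (fun x => f (x :: l))).
Qed.

Lemma sum_bounded_lists_ext k m f g :
  (forall l, length l = k -> f l = g l) -> sum_bounded_lists k m f = sum_bounded_lists k m g.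
Proof.
  revert f g. induction k; intros f g H; cbn [sum_bounded_lists]; [apply H; reflexivity|].
  apply IHk. intros l Hl. apply fsum_ext. intros x _. apply H. simpl. lia.
Qed.

Lemma sum_bounded_lists_plus k m f g :
  sum_bounded_lists k m (fun l => f l + g l) = sum_bounded_lists k m f + sum_bounded_lists k m g.
Proof.
  revert f g. induction k; intros f g; cbn [sum_bounded_lists]; [reflexivity|].
  rewrite <- IHk. apply sum_bounded_lists_ext. intros l _. apply fsum_plus.
Qed.

Lemma sum_bounded_lists_scal k m c f :
  sum_bounded_lists k m (fun l => c * f l) = c * sum_bounded_lists k m f.
Proof.
  revert f. induction k; intros f; cbn [sum_bounded_lists]; [reflexivity|].
  rewrite <- IHk. apply sum_bounded_lists_ext. intros l _. apply fsum_scal.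
Qed.

Lemma sum_bounded_lists_eq0 k m (f : list nat -> C) :
  (forall l, length l = k -> f l = 0) -> sum_bounded_lists k m f = 0.
Proof.
  revert f. induction k; intros f H; cbn [sum_bounded_lists]; [apply H; reflexivity|].
  apply IHk. intros l Hl. apply fsum_eq0. intros x _. apply H. simpl. lia.
Qed.

Lemma sum_bounded_lists_last k m f :
  sum_bounded_lists (S k) m f =
  sum_bounded_lists k m (fun l => fsum (fun x => f (l ++ x :: nil)) (S m)).
Proof.
  revert f. induction k; intros f; [reflexivity|].
  change (sum_bounded_lists (S (S k)) m f) with
    (sum_bounded_lists (S k) m (fun l => fsum (fun y => f (y :: l)) (S m))).
  rewrite IHk. cbn [sum_bounded_lists]. apply sum_bounded_lists_ext. intros l _.
  exact (fsum_swap (fun x y => f (y :: l ++ x :: nil)) (S m) (S m)).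
Qed.

Lemma sum_bounded_lists_bound k m m' (f : list nat -> C) : (m' <= m)%nat ->
  (forall l x, In x l -> (m' < x)%nat -> f l = 0) ->
  sum_bounded_lists k m f = sum_bounded_lists k m' f.
Proof.
  revert f. induction k; intros f Hm H; cbn [sum_bounded_lists]; [reflexivity|].
  rewrite (IHk (fun l => fsum (fun x => f (x :: l)) (S m))); [|exact Hm|].
  - apply sum_bounded_lists_ext. intros l _. apply fsum_trunc; [lia|].
    intros x Hx. apply (H _ x); [left; reflexivity|lia].
  - intros l x Hx Hx'. apply fsum_eq0. intros y _. apply (H _ x); [right|]; assumption.
Qed.

Definition allpos (l : list nat) : bool := forallb (Nat.ltb 0) l.

Lemma sum_bounded_lists_allpos k m (f : list nat -> C) :
  sum_bounded_lists k (S m) (fun l => if allpos l then f l else 0) =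
  sum_bounded_lists k m (fun l => f (map S l)).
Proof.
  revert f. induction k; intros f; [reflexivity|]. cbn [sum_bounded_lists].
  transitivity (sum_bounded_lists k (S m)
    (fun l => if allpos l then fsum (fun y => f (S y :: l)) (S m) else 0)).
  - apply sum_bounded_lists_ext. intros l _.
    change (allpos (0%nat :: l)) with false. rewrite fsum_S, Cplus_0_l.
    change (fun y => if allpos (S y :: l) then f (S y :: l) else 0)
      with (fun y => if allpos l then f (S y :: l) else 0).
    destruct (allpos l); [reflexivity|]. apply fsum_eq0. reflexivity.
  - rewrite (IHk (fun l => fsum (fun y => f (S y :: l)) (S m))). reflexivity.
Qed.

Fixpoint part_weight (z : nat -> C) (l : list nat) : C :=
  match l with
  | nil => 1
  | x :: l' => Cpow (z 0%nat) x * part_weight (fun r => z (S r)) l'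
  end.

Fixpoint col_weight (z : nat -> C) (n : nat) : C :=
  match n with O => 1 | S n => col_weight z n * z n end.

Definition weight_at (i : nat) (a : C) : nat -> C := fun r => if Nat.eqb r i then a else 1.

Lemma col_weight_shift z n : col_weight z (S n) = z 0%nat * col_weight (fun r => z (S r)) n.
Proof. induction n; simpl in *; [|rewrite IHn]; ring. Qed.

Lemma col_weight_mult f g n : col_weight (fun r => f r * g r) n = col_weight f n * col_weight g n.
Proof. induction n; simpl; [|rewrite IHn]; ring. Qed.

Lemma col_weight_one n : col_weight (fun _ => 1) n = 1.
Proof. induction n; simpl; [|rewrite IHn]; ring. Qed.

Lemma col_weight_at i a n : col_weight (weight_at i a) n = if Nat.ltb i n then a else 1.
Proof.
  induction n; simpl; [destruct i; reflexivity|]. rewrite IHn. unfold weight_at.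
  destruct (Nat.ltb_spec i n), (Nat.eqb_spec n i), (Nat.ltb_spec i (S n)); try lia; ring.
Qed.

Lemma part_weight_ext z z' l : (forall r, z r = z' r) -> part_weight z l = part_weight z' l.
Proof.
  revert z z'. induction l; intros z z' H; simpl; [reflexivity|].
  rewrite H. f_equal. apply IHl. intros; apply H.
Qed.

Lemma part_weight_app1 z l x :
  part_weight z (l ++ x :: nil) = part_weight z l * Cpow (z (length l)) x.
Proof. revert z. induction l; intros z; simpl; [|rewrite IHl]; ring. Qed.

Lemma part_weight_mapS z l : part_weight z (map S l) = part_weight z l * col_weight z (length l).
Proof.
  revert z. induction l; intros z; [simpl; ring|].
  cbn [map part_weight length]. rewrite IHl, col_weight_shift. simpl Cpow. ring.
Qed.

Lemma part_weight_mult f g l :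
  part_weight (fun r => f r * g r) l = part_weight f l * part_weight g l.
Proof.
  revert f g. induction l; intros f g; simpl; [ring|].
  rewrite (IHl (fun r => f (S r)) (fun r => g (S r))), Cpow_mult_l. ring.
Qed.

Lemma part_weight_one l : part_weight (fun _ => 1) l = 1.
Proof. induction l; simpl; [reflexivity|]. rewrite IHl, Cpow_1_l. apply Cmult_1_l. Qed.

Lemma part_weight_at i a l : part_weight (weight_at i a) l = Cpow a (nth i l 0%nat).
Proof.
  revert i. induction l; intros i; [destruct i; reflexivity|].
  destruct i as [|i]; simpl; unfold weight_at at 1; simpl.
  - rewrite (part_weight_ext _ (fun _ => 1)), part_weight_one; [ring|reflexivity].
  - rewrite Cpow_1_l, Cmult_1_l, <- IHl. apply part_weight_ext. reflexivity.
Qed.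

Lemma part_weight_norm_le z l : (forall r, Cmod (z r) <= 1)%R -> (Cmod (part_weight z l) <= 1)%R.
Proof.
  revert z. induction l; intros z H; simpl; [rewrite Cmod_1; lra|].
  rewrite Cmod_mult, Cmod_pow. rewrite <- (Rmult_1_l 1).
  apply Rmult_le_compat; [apply pow_le, Cmod_ge_0|apply Cmod_ge_0| |apply IHl; intros; apply H].
  rewrite <- (pow1 a). apply pow_incr. split; [apply Cmod_ge_0|apply H].
Qed.

Lemma nonincreasing_app0 l : nonincreasing (l ++ 0%nat :: nil) = nonincreasing l.
Proof.
  induction l as [|x [|y l'] IH]; [reflexivity|reflexivity|].
  change (Nat.leb y x && nonincreasing ((y :: l') ++ 0%nat :: nil) =
          Nat.leb y x && nonincreasing (y :: l')).
  rewrite IH. reflexivity.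
Qed.

Lemma nonincreasing_app_le l x :
  nonincreasing (l ++ x :: nil) = true -> forall y, In y l -> (x <= y)%nat.
Proof.
  induction l as [|a [|b l'] IH]; intros H y Hy; [destruct Hy| |].
  - simpl in H. apply andb_true_iff in H as [H _]. apply Nat.leb_le in H.
    destruct Hy as [<-|[]]. exact H.
  - change (Nat.leb b a && nonincreasing ((b :: l') ++ x :: nil) = true) in H.
    apply andb_true_iff in H as [H1 H2]. apply Nat.leb_le in H1.
    destruct Hy as [<-|Hy]; [|apply IH; assumption].
    assert (x <= b)%nat by (apply IH; [exact H2|left; reflexivity]). lia.
Qed.

Lemma nonincreasing_mapS l : nonincreasing (map S l) = nonincreasing l.
Proof.
  induction l as [|x [|y l'] IH]; [reflexivity|reflexivity|].
  change (Nat.leb (S y) (S x) && nonincreasing (map S (y :: l')) =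
          Nat.leb y x && nonincreasing (y :: l')).
  rewrite IH. reflexivity.
Qed.

Lemma list_sum_mapS l : list_sum (map S l) = (list_sum l + length l)%nat.
Proof. induction l; simpl; [reflexivity|]. unfold list_sum in *. simpl. rewrite IHl. lia. Qed.

Lemma list_sum_app1 l x : list_sum (l ++ x :: nil) = (list_sum l + x)%nat.
Proof. induction l; unfold list_sum in *; simpl; [lia|]. rewrite IHl. lia. Qed.

Lemma In_le_list_sum x l : In x l -> (x <= list_sum l)%nat.
Proof.
  induction l; simpl; intros H; [destruct H|]. unfold list_sum in *. simpl.
  destruct H; [lia|]. specialize (IHl H). lia.
Qed.

Lemma allpos_length_le l : allpos l = true -> (length l <= list_sum l)%nat.
Proof.
  induction l; simpl; intros H; [lia|]. unfold allpos in H. simpl in H.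
  apply andb_true_iff in H as [H1 H2]. apply Nat.ltb_lt in H1. specialize (IHl H2).
  unfold list_sum in *. simpl. lia.
Qed.

Definition is_part_of (n : nat) (l : list nat) : bool :=
  nonincreasing l && Nat.eqb (list_sum l) n.

(* Partitions of n with at most k parts are the nonincreasing lists of length k (padded
   with zeros) with sum n. *)
Definition part_wsum (z : nat -> C) (k n : nat) : C :=
  csum_list (map (part_weight z) (filter (is_part_of n) (bounded_lists k n))).

Lemma part_wsum_partitions z n : part_wsum z n n = csum_list (map (part_weight z) (partitions n)).
Proof. reflexivity. Qed.

Lemma part_wsum_sum_lists z k n :
  part_wsum z k n =
  sum_bounded_lists k n (fun l => if is_part_of n l then part_weight z l else 0).
Proof. unfold part_wsum. rewrite csum_list_filter. apply csum_list_bounded_lists. Qed.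

Lemma part_wsum_0 z n : part_wsum z 0 n = if Nat.eqb n 0 then 1 else 0.
Proof. unfold part_wsum. simpl. destruct n; simpl; [ring|reflexivity]. Qed.

Section Recurrence.
Variables (z : nat -> C) (k n : nat).

Let F (l : list nat) : C := if is_part_of n l then part_weight z l else 0.

Lemma sum_parts_with_zero :
  sum_bounded_lists (S k) n (fun l => if allpos l then 0 else F l) = part_wsum z k n.
Proof.
  rewrite part_wsum_sum_lists, sum_bounded_lists_last. apply sum_bounded_lists_ext.
  intros l _. rewrite fsum_S.
  assert (Hl0 : allpos (l ++ 0%nat :: nil) = false).
  { unfold allpos. rewrite forallb_app. apply andb_false_r. }
  rewrite Hl0, fsum_eq0; [|intros y _].
  - unfold F, is_part_of.
    rewrite nonincreasing_app0, list_sum_app1, Nat.add_0_r, part_weight_app1. simpl Cpow.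
    destruct (_ && _); ring.
  - destruct (nonincreasing (l ++ S y :: nil)) eqn:E.
    + replace (allpos (l ++ S y :: nil)) with true; [reflexivity|].
      symmetry. apply forallb_forall. intros x Hx. apply Nat.ltb_lt.
      apply in_app_or in Hx as [Hx|[<-|[]]]; [|lia].
      pose proof (nonincreasing_app_le _ _ E x Hx). lia.
    + destruct (allpos (l ++ S y :: nil)); [reflexivity|].
      unfold F, is_part_of. rewrite E. reflexivity.
Qed.

Lemma sum_parts_positive :
  sum_bounded_lists (S k) n (fun l => if allpos l then F l else 0) =
  if Nat.leb (S k) n then col_weight z (S k) * part_wsum z (S k) (n - S k) else 0.
Proof.
  destruct n as [|n'].
  - apply sum_bounded_lists_eq0. intros l Hl. destruct (allpos l) eqn:E; [|reflexivity].
    pose proof (allpos_length_le _ E). unfold F, is_part_of.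
    destruct (Nat.eqb_spec (list_sum l) 0); [lia|]. rewrite andb_false_r. reflexivity.
  - rewrite sum_bounded_lists_allpos.
    destruct (Nat.leb_spec (S k) (S n')) as [Hk|Hk].
    + rewrite part_wsum_sum_lists, <- sum_bounded_lists_scal.
      rewrite <- (sum_bounded_lists_bound (S k) n' (S n' - S k)); [|lia|].
      * apply sum_bounded_lists_ext. intros L HL. unfold F, is_part_of.
        rewrite nonincreasing_mapS, list_sum_mapS, part_weight_mapS, HL.
        destruct (nonincreasing L); cbn [andb]; [|ring].
        destruct (Nat.eqb_spec (list_sum L + S k) (S n')),
          (Nat.eqb_spec (list_sum L) (S n' - S k)); try lia; ring.
      * intros l x Hx Hx'. pose proof (In_le_list_sum _ _ Hx). unfold is_part_of.
        destruct (Nat.eqb_spec (list_sum l) (S n' - S k)); [lia|].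
        rewrite andb_false_r. ring.
    + apply sum_bounded_lists_eq0. intros L HL. unfold F, is_part_of.
      rewrite list_sum_mapS, HL.
      destruct (Nat.eqb_spec (list_sum L + S k) (S n')); [lia|].
      rewrite andb_false_r. reflexivity.
Qed.

End Recurrence.

Lemma part_wsum_S z k n :
  part_wsum z (S k) n =
  part_wsum z k n +
  (if Nat.leb (S k) n then col_weight z (S k) * part_wsum z (S k) (n - S k) else 0).
Proof.
  rewrite <- (sum_parts_with_zero z k n), <- (sum_parts_positive z k n),
    <- sum_bounded_lists_plus, part_wsum_sum_lists.
  apply sum_bounded_lists_ext. intros l _. destruct (allpos l); ring.
Qed.

(** * Partition numbers *)

Definition part_count (k n : nat) : nat := length (filter (is_part_of n) (bounded_lists k n)).

Lemma csum_list_weight_norm_le z L :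
  (forall r, Cmod (z r) <= 1)%R -> (Cmod (csum_list (map (part_weight z) L)) <= INR (length L))%R.
Proof.
  intros Hz. unfold csum_list. induction L as [|l L IH]; simpl fold_right;
    [rewrite Cmod_0; simpl; lra|].
  change (length (l :: L)) with (S (length L)). rewrite S_INR.
  eapply Rle_trans; [apply Cmod_triangle|].
  pose proof (part_weight_norm_le z l Hz). lra.
Qed.

Lemma part_wsum_norm_le z k n :
  (forall r, Cmod (z r) <= 1)%R -> (Cmod (part_wsum z k n) <= INR (part_count k n))%R.
Proof. apply csum_list_weight_norm_le. Qed.

Lemma part_wsum_one k n : part_wsum (fun _ => 1) k n = RtoC (INR (part_count k n)).
Proof.
  unfold part_wsum, part_count, csum_list. induction (filter _ _) as [|l L IH]; [reflexivity|].
  simpl fold_right. change (length (l :: L)) with (S (length L)).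
  rewrite IH, part_weight_one, S_INR, RtoC_plus. ring.
Qed.

Lemma part_count_S k n :
  part_count (S k) n =
  (part_count k n + (if Nat.leb (S k) n then part_count (S k) (n - S k) else 0))%nat.
Proof.
  apply INR_eq, RtoC_inj. rewrite <- part_wsum_one, part_wsum_S, col_weight_one, plus_INR,
    RtoC_plus, <- part_wsum_one.
  destruct (Nat.leb _ _); [rewrite <- part_wsum_one; ring|simpl; ring].
Qed.

Lemma part_count_0 n : part_count 0 n = if Nat.eqb n 0 then 1%nat else 0%nat.
Proof. unfold part_count. simpl. destruct n; reflexivity. Qed.

Lemma part_count_pad k n : (n <= k)%nat -> part_count k n = part_count n n.
Proof.
  intros H. induction H; [reflexivity|]. rewrite part_count_S.
  destruct (Nat.leb_spec (S m) n); [lia|]. lia.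
Qed.

Lemma part_wsum_pad z k n : (n <= k)%nat -> part_wsum z k n = part_wsum z n n.
Proof.
  intros H. induction H; [reflexivity|]. rewrite part_wsum_S.
  destruct (Nat.leb_spec (S m) n); [lia|]. rewrite IHle. ring.
Qed.

Lemma part_count_mono k k' n : (k <= k')%nat -> (part_count k n <= part_count k' n)%nat.
Proof. intros H. induction H; [lia|]. rewrite part_count_S. lia. Qed.

Lemma part_count_le k n : (part_count k n <= part_count n n)%nat.
Proof.
  destruct (Nat.le_gt_cases n k) as [H|H].
  - rewrite part_count_pad by exact H. lia.
  - apply part_count_mono. lia.
Qed.

Lemma fsumR_shift (h : nat -> R) s M :
  fsumR (fun n => if Nat.leb s n then h (n - s)%nat else 0%R) M = fsumR h (M - s).
Proof.
  induction M; [reflexivity|]. cbn [fsumR]. rewrite IHM.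
  destruct (Nat.leb_spec s M).
  - replace (S M - s)%nat with (S (M - s)) by lia. reflexivity.
  - replace (S M - s)%nat with 0%nat by lia. replace (M - s)%nat with 0%nat by lia.
    simpl. ring.
Qed.

Lemma fsumR_shift_le (g : nat -> R) (x : R) s M : (0 <= x)%R -> (forall n, 0 <= g n)%R ->
  (fsumR (fun n => if Nat.leb s n then g (n - s)%nat * x ^ n else 0)%R M
   <= x ^ s * fsumR (fun n => g n * x ^ n)%R M)%R.
Proof.
  intros Hx Hg.
  rewrite (fsumR_ext _
    (fun n => if Nat.leb s n then x ^ s * (g (n - s)%nat * x ^ (n - s)) else 0))%R.
  - rewrite (fsumR_shift (fun m => x ^ s * (g m * x ^ m))%R), fsumR_scal.
    apply Rmult_le_compat_l; [apply pow_le, Hx|].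
    apply fsumR_mono; [|lia]. intros n. apply Rmult_le_pos; [apply Hg|apply pow_le, Hx].
  - intros n _. destruct (Nat.leb_spec s n); [|reflexivity].
    rewrite <- (Nat.sub_add s n) at 2 by exact H. rewrite pow_add. ring.
Qed.

Definition part_count_psum (x : R) (k M : nat) : R :=
  fsumR (fun n => INR (part_count k n) * x ^ n)%R M.

Lemma part_count_psum_nonneg x k M : (0 <= x)%R -> (0 <= part_count_psum x k M)%R.
Proof.
  intros Hx. apply fsumR_nonneg. intros n. apply Rmult_le_pos; [apply pos_INR|apply pow_le, Hx].
Qed.

Lemma part_count_psum_S x k M : (0 <= x)%R ->
  (part_count_psum x (S k) M <= part_count_psum x k M + x ^ S k * part_count_psum x (S k) M)%R.
Proof.
  intros Hx. unfold part_count_psum at 1.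
  rewrite (fsumR_ext _ (fun n => INR (part_count k n) * x ^ n + (if Nat.leb (S k) n
    then INR (part_count (S k) (n - S k)) * x ^ n else 0))%R).
  - rewrite fsumR_plus. apply Rplus_le_compat_l.
    apply (fsumR_shift_le (fun n => INR (part_count (S k) n))); [exact Hx|intros; apply pos_INR].
  - intros n _. rewrite part_count_S, plus_INR. destruct (Nat.leb _ _); simpl; ring.
Qed.

Lemma exp_le_exp a b : (a <= b)%R -> (exp a <= exp b)%R.
Proof. intros [H|<-]; [left; apply exp_increasing, H|lra]. Qed.

Lemma part_count_psum_le_exp x k M : (0 <= x < 1)%R ->
  (part_count_psum x k M <= exp (fsumR (fun s => x ^ S s)%R k / (1 - x)))%R.
Proof.
  intros Hx. induction k.
  - simpl fsumR. unfold Rdiv. rewrite Rmult_0_l, exp_0.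
    unfold part_count_psum. induction M; simpl fsumR; [lra|].
    rewrite part_count_0. destruct M; simpl in *; lra.
  - set (y := (x ^ S k)%R).
    assert (Hy : (0 <= y <= x)%R).
    { unfold y. simpl. split; [apply Rmult_le_pos, pow_le; lra|].
      assert (x ^ k <= 1)%R by (rewrite <- (pow1 k); apply pow_incr; lra).
      assert (0 <= x ^ k)%R by (apply pow_le; lra). nra. }
    assert (Hstep : (part_count_psum x (S k) M <= part_count_psum x k M / (1 - y))%R).
    { pose proof (part_count_psum_S x k M (proj1 Hx)).
      apply (Rmult_le_reg_r (1 - y)); [lra|]. unfold Rdiv.
      rewrite Rmult_assoc, Rinv_l by lra. fold y in H. lra. }
    eapply Rle_trans; [exact Hstep|]. cbn [fsumR]. fold y.
    replace ((fsumR (fun s => x ^ S s) k + y) / (1 - x))%R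
      with (fsumR (fun s => x ^ S s) k / (1 - x) + y / (1 - x))%R by (unfold Rdiv; ring).
    rewrite exp_plus. unfold Rdiv at 1. apply Rmult_le_compat.
    + apply part_count_psum_nonneg. lra.
    + left. apply Rinv_0_lt_compat. lra.
    + exact IHk.
    + (* (1 - y)^-1 <= exp (y / (1 - y)) <= exp (y / (1 - x)) *)
      apply Rle_trans with (exp (y / (1 - y))).
      * eapply Rle_trans; [|apply exp_ineq1_le]. right. field. lra.
      * apply exp_le_exp. unfold Rdiv. apply Rmult_le_compat_l; [lra|].
        apply Rinv_le_contravar; lra.
Qed.

Lemma fsumR_geom x k : (fsumR (fun s => x ^ s) k * (1 - x) = 1 - x ^ k)%R.
Proof. induction k; cbn [fsumR]; [simpl; ring|]. rewrite Rmult_plus_distr_r, IHk. simpl. ring. Qed.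

Lemma fsumR_geom_le x k : (0 <= x < 1)%R -> (fsumR (fun s => x ^ S s)%R k <= x / (1 - x))%R.
Proof.
  intros Hx. rewrite (fsumR_ext _ (fun s => x * x ^ s)%R), fsumR_scal by reflexivity.
  unfold Rdiv. apply Rmult_le_compat_l; [lra|].
  apply (Rmult_le_reg_r (1 - x)); [lra|]. rewrite fsumR_geom, Rinv_l by lra.
  pose proof (pow_le x k (proj1 Hx)). lra.
Qed.

Lemma ex_series_partitions x :
  (0 <= x < 1)%R -> ex_series (fun n => INR (part_count n n) * x ^ n)%R.
Proof.
  intros Hx.
  assert (Hterm : forall n, (0 <= INR (part_count n n) * x ^ n)%R)
    by (intros; apply Rmult_le_pos; [apply pos_INR|apply pow_le; lra]).
  destruct (ex_finite_lim_seq_incr (fsumR (fun n => INR (part_count n n) * x ^ n)%R)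
    (exp (x / (1 - x) / (1 - x)))) as [l Hl].
  - intros n. simpl. specialize (Hterm n). lra.
  - intros M. eapply Rle_trans; [|eapply Rle_trans; [apply (part_count_psum_le_exp x M M Hx)|]].
    + right. apply fsumR_ext. intros n Hn. rewrite (part_count_pad M n) by lia. reflexivity.
    + apply exp_le_exp. unfold Rdiv at 1 3. apply Rmult_le_compat_r.
      * left. apply Rinv_0_lt_compat. lra.
      * apply fsumR_geom_le, Hx.
  - exists l. apply is_lim_seq_incr_1 in Hl.
    apply (is_lim_seq_ext _ (sum_n (fun n => INR (part_count n n) * x ^ n)%R)) in Hl; [exact Hl|].
    intros n. symmetry. apply sum_n_fsumR.
Qed.

(** * q-Pochhammer symbols *)

Lemma qpoch_norm_le a v r : (Cmod v < 1)%R ->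
  (Cmod (qpoch a v r) <= exp (Cmod a / (1 - Cmod v)))%R.
Proof.
  intros Hv. pose proof (Cmod_ge_0 v) as Hv0.
  apply Rle_trans with (exp (Cmod a * fsumR (fun s => Cmod v ^ s)%R r)).
  - induction r; simpl qpoch; cbn [fsumR].
    + rewrite Cmod_1, Rmult_0_r, exp_0. lra.
    + rewrite Cmod_mult, Rmult_plus_distr_l, exp_plus.
      apply Rmult_le_compat; try apply Cmod_ge_0; [exact IHr|].
      eapply Rle_trans; [|apply exp_ineq1_le].
      replace (1 - a * Cpow v r) with (RtoC 1 + - (a * Cpow v r)) by ring.
      eapply Rle_trans; [apply Cmod_triangle|].
      rewrite Cmod_1, Cmod_opp, Cmod_mult, Cmod_pow. lra.
  - apply exp_le_exp. unfold Rdiv. apply Rmult_le_compat_l; [apply Cmod_ge_0|].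
    apply (Rmult_le_reg_r (1 - Cmod v)); [lra|]. rewrite fsumR_geom, Rinv_l by lra.
    pose proof (pow_le (Cmod v) r Hv0). lra.
Qed.

Lemma qpoch_inf_cv a v : (Cmod v < 1)%R -> cvC (qpoch a v) (qpoch_inf a v).
Proof.
  intros Hv. unfold qpoch_inf. change (fun r => qpoch a v r) with (qpoch a v).
  (* (a)_r is 1 plus the partial sums of the increments (a)_(s+1) - (a)_s = - a v^s (a)_s,
     a geometrically dominated series *)
  set (M := exp (Cmod a / (1 - Cmod v))).
  assert (Hd : is_seriesC (fun s => qpoch a v (S s) - qpoch a v s)
                 (csum (fun s => qpoch a v (S s) - qpoch a v s))).
  { apply (is_seriesC_geom_dominated _ (M * Cmod a) (Cmod v)); [split; [apply Cmod_ge_0|exact Hv]|].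
    intros s. simpl qpoch.
    replace (qpoch a v s * (1 - a * Cpow v s) - qpoch a v s)
      with (- (qpoch a v s * a * Cpow v s)) by ring.
    rewrite Cmod_opp, !Cmod_mult, Cmod_pow. apply Rmult_le_compat_r; [apply pow_le, Cmod_ge_0|].
    apply Rmult_le_compat_r; [apply Cmod_ge_0|apply qpoch_norm_le, Hv]. }
  assert (Hl : cvC (qpoch a v) (1 + csum (fun s => qpoch a v (S s) - qpoch a v s))).
  { apply cvC_shift1. apply is_seriesC_cvC in Hd.
    eapply cvC_ext_eventually with (N := 0%nat); [|apply (cvC_plus _ _ _ _ (cvC_const 1) Hd)].
    intros n _. cbv beta. rewrite sum_n_fsum.
    assert (T : forall m, fsum (fun s => qpoch a v (S s) - qpoch a v s) m = qpoch a v m - 1).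
    { induction m; cbn [fsum]; [cbn [qpoch]; ring|]. rewrite IHm. ring. }
    rewrite T. ring. }
  rewrite (clim_eq _ _ Hl). exact Hl.
Qed.

Lemma qpoch_neq0 a v r : (Cmod a < 1)%R -> (Cmod v <= 1)%R -> qpoch a v r <> 0.
Proof.
  intros Ha Hv. induction r; simpl qpoch.
  - intros H. injection H. lra.
  - apply Cmult_neq_0; [exact IHr|]. intros H.
    assert (E : a * Cpow v r = 1) by (rewrite <- (Cplus_0_l (a * Cpow v r)), <- H; ring).
    apply (f_equal Cmod) in E. rewrite Cmod_mult, Cmod_pow, Cmod_1 in E.
    assert (Cmod v ^ r <= 1)%R
      by (rewrite <- (pow1 r); apply pow_incr; split; [apply Cmod_ge_0|exact Hv]).
    pose proof (Cmod_ge_0 a). pose proof (pow_le (Cmod v) r (Cmod_ge_0 v)). nra.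
Qed.

Lemma qpoch_mul_neq0 v a i : (Cmod v < 1)%R -> (Cmod a < 1)%R -> qpoch (v * a) v i <> 0.
Proof.
  intros hv Ha. apply qpoch_neq0; [|lra]. rewrite Cmod_mult.
  pose proof (Cmod_ge_0 v). pose proof (Cmod_ge_0 a). nra.
Qed.

Lemma qpoch_ratio_neq0 v a i :
  (Cmod v < 1)%R -> (Cmod a < 1)%R -> qpoch (v * a) v i / qpoch v v i <> 0.
Proof.
  intros hv Ha E. assert (qpoch v v i <> 0) by (apply qpoch_neq0; lra).
  apply (qpoch_mul_neq0 v a i hv Ha).
  transitivity (qpoch (v * a) v i / qpoch v v i * qpoch v v i); [field; assumption|].
  rewrite E. ring.
Qed.

(** * Generating functions of weighted partitions *)

Fixpoint col_prod (z : nat -> C) (v : C) (k : nat) : C :=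
  match k with
  | O => 1
  | S k => col_prod z v k * (1 - col_weight z (S k) * Cpow v (S k))
  end.

Lemma col_prod_qpoch z v c m1 m2 : (m1 <= m2)%nat ->
  (forall s, (m1 <= s < m2)%nat -> col_weight z (S s) = c) ->
  col_prod z v m2 * qpoch (v * c) v m1 = col_prod z v m1 * qpoch (v * c) v m2.
Proof.
  intros Hm H. induction Hm; [ring|]. cbn [col_prod qpoch]. rewrite H by lia.
  transitivity (col_prod z v m * qpoch (v * c) v m1 * (1 - c * Cpow v (S m))); [ring|].
  rewrite IHHm by (intros; apply H; lia). simpl Cpow. ring.
Qed.

Lemma col_prod_one_prefix z v m :
  (forall s, (s < m)%nat -> col_weight z (S s) = 1) -> col_prod z v m = qpoch v v m.
Proof.
  intros H. pose proof (col_prod_qpoch z v 1 0 m ltac:(lia) ltac:(intros; apply H; lia)) as E.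
  rewrite Cmult_1_r in E. simpl in E. rewrite Cmult_1_r, Cmult_1_l in E. exact E.
Qed.

Definition part_gf_trunc (z : nat -> C) (v : C) (k : nat) : C :=
  csum (fun n => part_wsum z k n * Cpow v n).

Definition part_gf (z : nat -> C) (v : C) : C := csum (fun n => part_wsum z n n * Cpow v n).

Section GeneratingFunction.
Variables (z : nat -> C) (v : C).
Hypothesis Hz : forall r, (Cmod (z r) <= 1)%R.
Hypothesis Hv : (Cmod v < 1)%R.

Let dominant n := (INR (part_count n n) * Cmod v ^ n)%R.

Let ex_series_dominant : ex_series dominant.
Proof. apply ex_series_partitions. split; [apply Cmod_ge_0|exact Hv]. Qed.

Lemma part_wsum_norm_le_count k n : (Cmod (part_wsum z k n) <= INR (part_count n n))%R.
Proof. eapply Rle_trans; [apply part_wsum_norm_le, Hz|apply le_INR, part_count_le]. Qed.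

Let term_norm_le k n : (Cmod (part_wsum z k n * Cpow v n) <= dominant n)%R.
Proof.
  unfold dominant. rewrite Cmod_mult, Cmod_pow.
  apply Rmult_le_compat_r; [apply pow_le, Cmod_ge_0|apply part_wsum_norm_le_count].
Qed.

Lemma is_seriesC_part_gf_trunc k :
  is_seriesC (fun n => part_wsum z k n * Cpow v n) (part_gf_trunc z v k).
Proof.
  apply is_seriesC_csum.
  exact (is_seriesC_dominated (fun n => part_wsum z k n * Cpow v n) dominant (term_norm_le k)
    ex_series_dominant).
Qed.

Lemma is_seriesC_part_gf : is_seriesC (fun n => part_wsum z n n * Cpow v n) (part_gf z v).
Proof.
  apply is_seriesC_csum.
  exact (is_seriesC_dominated (fun n => part_wsum z n n * Cpow v n) dominant
    (fun n => term_norm_le n n) ex_series_dominant).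
Qed.

Lemma part_gf_norm_le B : is_series dominant B -> (Cmod (part_gf z v) <= B)%R.
Proof.
  intros HB.
  exact (is_seriesC_norm_le (fun n => part_wsum z n n * Cpow v n) (part_gf z v) dominant B
    is_seriesC_part_gf HB (fun n => term_norm_le n n)).
Qed.

Lemma part_gf_trunc_0 : part_gf_trunc z v 0 = 1.
Proof.
  apply csum_eq.
  replace (RtoC 1) with (fsum (fun n => part_wsum z 0 n * Cpow v n) 1 + 0)
    by (cbn [fsum]; rewrite part_wsum_0; simpl; ring).
  apply is_seriesC_of_tail. eapply is_series_ext; [|apply is_seriesC_zero].
  intros n. cbv beta. rewrite part_wsum_0. simpl. ring.
Qed.

Lemma part_gf_trunc_S k :
  part_gf_trunc z v (S k) * (1 - col_weight z (S k) * Cpow v (S k)) = part_gf_trunc z v k.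
Proof.
  set (w := col_weight z (S k) * Cpow v (S k)).
  (* the second summand of part_wsum_S contributes w times the series of part_gf_trunc (S k),
     shifted by k + 1 *)
  set (c := fun n => if Nat.leb (S k) n
                     then col_weight z (S k) * part_wsum z (S k) (n - S k) * Cpow v n else 0).
  assert (Hc : is_seriesC c (w * part_gf_trunc z v (S k))).
  { assert (Hc0 : fsum c (S k) = 0).
    { apply fsum_eq0. intros n Hn. unfold c. destruct (Nat.leb_spec (S k) n); [lia|reflexivity]. }
    rewrite <- (Cplus_0_l (w * _)), <- Hc0. apply is_seriesC_of_tail.
    eapply is_series_ext; [|apply is_seriesC_scal_l, is_seriesC_part_gf_trunc].
    intros m. unfold c, w. destruct (Nat.leb_spec (S k) (S k + m)); [|lia].
    replace (S k + m - S k)%nat with m by lia. rewrite Cpow_add_r. retype_C; ring. }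
  assert (H2 : is_seriesC (fun n => part_wsum z (S k) n * Cpow v n)
                 (part_gf_trunc z v k + w * part_gf_trunc z v (S k))).
  { eapply is_series_ext; [|apply (is_seriesC_plus _ _ _ _ (is_seriesC_part_gf_trunc k) Hc)].
    intros n. unfold c. cbv beta. rewrite (part_wsum_S z k n).
    destruct (Nat.leb _ _); retype_C; ring. }
  pose proof (csum_eq _ _ H2) as E. fold (part_gf_trunc z v (S k)) in E.
  fold w. transitivity (part_gf_trunc z v (S k) - w * part_gf_trunc z v (S k)); [ring|].
  rewrite E at 1. ring.
Qed.

Lemma part_gf_trunc_col_prod k : part_gf_trunc z v k * col_prod z v k = 1.
Proof.
  induction k; cbn [col_prod]; [rewrite part_gf_trunc_0; ring|].
  transitivity (part_gf_trunc z v (S k) * (1 - col_weight z (S k) * Cpow v (S k)) * col_prod z v k);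
    [ring|]. rewrite part_gf_trunc_S. exact IHk.
Qed.

Lemma part_gf_trunc_cv : cvC (part_gf_trunc z v) (part_gf z v).
Proof.
  destruct ex_series_dominant as [T HT].
  apply cvC_squeeze with (b := fun k => (2 * (T - fsumR dominant (S k)))%R).
  - intros k.
    (* the two series agree on their first k + 1 terms *)
    assert (Hd := is_seriesC_tail _ _ (S k)
      (is_seriesC_minus _ _ _ _ (is_seriesC_part_gf_trunc k) is_seriesC_part_gf)).
    rewrite fsum_eq0 in Hd; [|intros n Hn; rewrite (part_wsum_pad z k n) by lia; ring].
    replace (part_gf_trunc z v k - part_gf z v)
      with (part_gf_trunc z v k - part_gf z v - 0) by ring.
    eapply is_seriesC_norm_le;
      [exact Hd|exact (is_series_scal_l 2 _ _ (is_series_tail _ _ (S k) HT))|].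
    intros n. cbv beta. set (N := (S k + n)%nat).
    replace (part_wsum z k N * Cpow v N - part_wsum z N N * Cpow v N)
      with ((part_wsum z k N - part_wsum z N N) * Cpow v N) by ring.
    assert (Hab : (Cmod (part_wsum z k N - part_wsum z N N) <= 2 * INR (part_count N N))%R).
    { unfold Cminus. eapply Rle_trans; [apply Cmod_triangle|]. rewrite Cmod_opp.
      pose proof (part_wsum_norm_le_count k N). pose proof (part_wsum_norm_le_count N N). lra. }
    rewrite Cmod_mult, Cmod_pow. unfold dominant. rewrite <- Rmult_assoc.
    apply Rmult_le_compat_r; [apply pow_le, Cmod_ge_0|exact Hab].
  - replace (Finite 0%R) with (Rbar_mult 2 0%R) by (simpl; f_equal; ring).
    apply is_lim_seq_scal_l.
    apply (is_lim_seq_incr_1 (fun k => T - fsumR dominant k)%R), is_series_tail_lim, HT.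
Qed.

Lemma part_gf_col_prod c m : (forall s, (m <= s)%nat -> col_weight z (S s) = c) ->
  part_gf z v * col_prod z v m * qpoch_inf (v * c) v = qpoch (v * c) v m.
Proof.
  intros H.
  apply (cvC_unique (fun k => part_gf_trunc z v k * col_prod z v m * qpoch (v * c) v k)).
  - apply cvC_mult; [apply cvC_mult; [apply part_gf_trunc_cv|apply cvC_const]|].
    apply qpoch_inf_cv, Hv.
  - apply (cvC_ext_eventually (fun _ => qpoch (v * c) v m) _ _ m); [|apply cvC_const].
    intros k Hk. rewrite <- Cmult_assoc, <- (col_prod_qpoch z v c m k Hk) by (intros; apply H; lia).
    transitivity (part_gf_trunc z v k * col_prod z v k * qpoch (v * c) v m); [|ring].
    rewrite part_gf_trunc_col_prod. ring.
Qed.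

End GeneratingFunction.

Definition pair_weight (q1 q2 : C) (i j : nat) : nat -> C :=
  fun r => weight_at i q1 r * weight_at j q2 r.

Definition pair_gf (q1 q2 v : C) (i j : nat) : C := part_gf (pair_weight q1 q2 i j) v.

Lemma part_weight_pair q1 q2 i j lam :
  part_weight (pair_weight q1 q2 i j) lam = Cpow q1 (nth i lam 0%nat) * Cpow q2 (nth j lam 0%nat).
Proof. unfold pair_weight. rewrite part_weight_mult, !part_weight_at. reflexivity. Qed.

Lemma pair_weight_comm q1 q2 i j : pair_weight q1 q2 i j = pair_weight q2 q1 j i.
Proof. apply functional_extensionality. intros r. apply Cmult_comm. Qed.

Lemma pair_gf_comm q1 q2 v i j : pair_gf q1 q2 v i j = pair_gf q2 q1 v j i.
Proof. unfold pair_gf. rewrite pair_weight_comm. reflexivity. Qed.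

Lemma pair_weight_norm_le q1 q2 i j r :
  (Cmod q1 <= 1)%R -> (Cmod q2 <= 1)%R -> (Cmod (pair_weight q1 q2 i j r) <= 1)%R.
Proof.
  intros H1 H2. unfold pair_weight, weight_at. pose proof (Cmod_ge_0 q1). pose proof (Cmod_ge_0 q2).
  destruct (Nat.eqb r i), (Nat.eqb r j); rewrite Cmod_mult, ?Cmod_1; nra.
Qed.

Lemma col_weight_pair q1 q2 i j n :
  col_weight (pair_weight q1 q2 i j) n =
  (if Nat.ltb i n then q1 else 1) * (if Nat.ltb j n then q2 else 1).
Proof. unfold pair_weight. rewrite col_weight_mult, !col_weight_at. reflexivity. Qed.

Section PairGeneratingFunction.
Variables q1 q2 v : C.
Hypothesis hv : (Cmod v < 1)%R.
Hypothesis hq1 : (Cmod q1 < 1)%R.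
Hypothesis hq2 : (Cmod q2 < 1)%R.

Let Hz i j r : (Cmod (pair_weight q1 q2 i j r) <= 1)%R.
Proof. apply pair_weight_norm_le; lra. Qed.

Lemma pair_gf_norm_bounded : exists K, forall i j, (Cmod (pair_gf q1 q2 v i j) <= K)%R.
Proof.
  destruct (ex_series_partitions (Cmod v)) as [K HK]; [split; [apply Cmod_ge_0|exact hv]|].
  exists K. intros i j. apply part_gf_norm_le; [apply Hz|exact hv|exact HK].
Qed.

Lemma pair_gf_col_prod i j m : (i <= m)%nat -> (j <= m)%nat ->
  pair_gf q1 q2 v i j * col_prod (pair_weight q1 q2 i j) v m * qpoch_inf (v * q1 * q2) v =
  qpoch (v * q1 * q2) v m.
Proof.
  intros Hi Hj. rewrite <- (Cmult_assoc v q1 q2). apply part_gf_col_prod; [apply Hz|exact hv|].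
  intros s Hs. rewrite col_weight_pair.
  destruct (Nat.ltb_spec i (S s)), (Nat.ltb_spec j (S s)); [reflexivity|lia..].
Qed.

Lemma pair_gf_diag_mul i :
  pair_gf q1 q2 v i i * qpoch v v i * qpoch_inf (v * q1 * q2) v = qpoch (v * q1 * q2) v i.
Proof.
  rewrite <- (pair_gf_col_prod i i i) by lia. f_equal. f_equal. symmetry.
  apply col_prod_one_prefix. intros s Hs. rewrite col_weight_pair.
  destruct (Nat.ltb_spec i (S s)); [lia|ring].
Qed.

Lemma qpoch_inf_neq0 : qpoch_inf (v * q1 * q2) v <> 0.
Proof.
  (* the case i = 0 exhibits pair_gf q1 q2 v 0 0 as an inverse *)
  intros H. pose proof (pair_gf_diag_mul 0) as E. rewrite H, Cmult_0_r in E.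
  simpl in E. injection E. lra.
Qed.

Lemma pair_gf_diag i :
  qpoch_inf (v * q1 * q2) v * pair_gf q1 q2 v i i = qpoch (v * q1 * q2) v i / qpoch v v i.
Proof.
  assert (qpoch v v i <> 0) by (apply qpoch_neq0; lra).
  rewrite <- pair_gf_diag_mul. field. exact H.
Qed.

Lemma pair_gf_lt i j : (i < j)%nat ->
  qpoch_inf (v * q1 * q2) v * pair_gf q1 q2 v i j =
  qpoch (v * q1) v i / qpoch v v i * (qpoch (v * q1 * q2) v j / qpoch (v * q1) v j).
Proof.
  intros Hij.
  assert (N0 : qpoch v v i <> 0) by (apply qpoch_neq0; lra).
  assert (N1 : qpoch (v * q1) v j <> 0) by (apply qpoch_mul_neq0; assumption).
  set (z := pair_weight q1 q2 i j).
  assert (Pi : col_prod z v i = qpoch v v i).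
  { apply col_prod_one_prefix. intros s Hs. unfold z. rewrite col_weight_pair.
    destruct (Nat.ltb_spec i (S s)), (Nat.ltb_spec j (S s)); [lia..|ring]. }
  assert (Pij : col_prod z v j * qpoch (v * q1) v i = col_prod z v i * qpoch (v * q1) v j).
  { apply col_prod_qpoch; [lia|]. intros s Hs. unfold z. rewrite col_weight_pair.
    destruct (Nat.ltb_spec i (S s)), (Nat.ltb_spec j (S s)); [lia|ring|lia..]. }
  rewrite <- (pair_gf_col_prod i j j) by lia. fold z. rewrite <- Pi.
  transitivity (pair_gf q1 q2 v i j * (col_prod z v j * qpoch (v * q1) v i) *
    qpoch_inf (v * q1 * q2) v / (col_prod z v i * qpoch (v * q1) v j)).
  - rewrite Pij. field. split; [exact N1|rewrite Pi; exact N0].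
  - field. split; [exact N1|rewrite Pi; exact N0].
Qed.
End PairGeneratingFunction.

(** * The average *)

Lemma csum_list_scal {X} (c : C) (g : X -> C) L :
  csum_list (map (fun x => c * g x) L) = c * csum_list (map g L).
Proof. induction L; simpl; [|rewrite IHL]; ring. Qed.

Lemma is_seriesC_csum_list {X} (L : list X) (g : X -> nat -> C) (s : X -> C) :
  (forall x, In x L -> is_seriesC (g x) (s x)) ->
  is_seriesC (fun i => csum_list (map (fun x => g x i) L)) (csum_list (map s L)).
Proof.
  induction L; intros H; simpl; [apply is_seriesC_zero|].
  apply is_seriesC_plus; [apply H; left; reflexivity|apply IHL; intros; apply H; right; assumption].
Qed.

Lemma is_seriesC_geom_weights (t q : C) (lam : list nat) : (Cmod t < 1)%R -> (Cmod q < 1)%R ->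
  is_seriesC (fun i => Cpow t i * Cpow q (nth i lam 0%nat))
    (csum (fun i => Cpow t i * Cpow q (nth i lam 0%nat))).
Proof.
  intros Ht Hq.
  apply (is_seriesC_geom_dominated _ 1 (Cmod t)); [split; [apply Cmod_ge_0|exact Ht]|].
  intros i. rewrite Cmod_mult, !Cmod_pow, Rmult_1_l.
  pose proof (pow_le (Cmod t) i (Cmod_ge_0 t)).
  assert (Cmod q ^ nth i lam 0%nat <= 1)%R
    by (rewrite <- (pow1 (nth i lam 0%nat)); apply pow_incr; split; [apply Cmod_ge_0|lra]).
  pose proof (pow_le (Cmod q) (nth i lam 0%nat) (Cmod_ge_0 q)). nra.
Qed.

Section Average.
Variables q1 t1 q2 t2 v : C.
Hypothesis hv : (Cmod v < 1)%R.
Hypothesis ht1 : (Cmod t1 < 1)%R.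
Hypothesis ht2 : (Cmod t2 < 1)%R.
Hypothesis hq1 : (Cmod q1 < 1)%R.
Hypothesis hq2 : (Cmod q2 < 1)%R.

Let c0 := / (1 - q1) * / (1 - q2).

Lemma partitions_Bhat_mul n :
  csum_list (map (fun lam => Bhat lam q1 t1 * Bhat lam q2 t2) (partitions n)) * Cpow v n =
  c0 * csum (fun i => csum (fun j =>
    Cpow t1 i * Cpow t2 j * part_wsum (pair_weight q1 q2 i j) n n * Cpow v n)).
Proof.
  set (L := partitions n).
  set (u1 := fun lam i => Cpow t1 i * Cpow q1 (nth i lam 0%nat)).
  set (u2 := fun lam j => Cpow t2 j * Cpow q2 (nth j lam 0%nat)).
  set (S2 := fun lam => csum (u2 lam) * Cpow v n).
  assert (EB : forall lam,
    Bhat lam q1 t1 * Bhat lam q2 t2 * Cpow v n = c0 * (csum (u1 lam) * S2 lam)).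
  { intros lam. unfold Bhat, c0, S2, u1, u2. ring. }
  rewrite Cmult_comm, <- csum_list_scal, (map_ext _ _ (fun lam => Cmult_comm _ _)).
  rewrite (map_ext _ _ EB), csum_list_scal. f_equal.
  assert (Hrow : forall i, is_seriesC
    (fun j => Cpow t1 i * Cpow t2 j * part_wsum (pair_weight q1 q2 i j) n n * Cpow v n)
    (csum_list (map (fun lam => u1 lam i * S2 lam) L))).
  { intros i. eapply is_series_ext;
      [|apply (is_seriesC_csum_list L (fun lam j => u1 lam i * (u2 lam j * Cpow v n)))].
    - intros j. cbv beta. rewrite part_wsum_partitions. fold L.
      transitivity (csum_list (map (fun lam => Cpow t1 i * Cpow t2 j * Cpow v n *
        part_weight (pair_weight q1 q2 i j) lam) L)).
      + f_equal. apply map_ext. intros lam. rewrite part_weight_pair. unfold u1, u2. ring.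
      + rewrite csum_list_scal. retype_C; ring.
    - intros lam _.
      apply is_seriesC_scal_l, is_seriesC_scal_r, is_seriesC_geom_weights; assumption. }
  rewrite (csum_ext _ _ (fun i => csum_eq _ _ (Hrow i))). symmetry.
  apply csum_eq, (is_seriesC_csum_list L (fun lam i => u1 lam i * S2 lam)).
  intros lam _. apply is_seriesC_scal_r, is_seriesC_geom_weights; assumption.
Qed.

Lemma qavg_Bhat_mul :
  qavg (fun lam => Bhat lam q1 t1 * Bhat lam q2 t2) v =
  qpoch_inf v v *
  (c0 * csum (fun i => csum (fun j => Cpow t1 i * Cpow t2 j * pair_gf q1 q2 v i j))).
Proof.
  assert (Hz : forall i j r, (Cmod (pair_weight q1 q2 i j r) <= 1)%R)
    by (intros; apply pair_weight_norm_le; lra).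
  assert (Hgeom : forall t, (Cmod t < 1)%R -> is_series (fun i => Cmod t ^ i)%R (/ (1 - Cmod t))%R)
    by (intros t Ht; apply is_series_geom; rewrite Rabs_pos_eq by apply Cmod_ge_0; exact Ht).
  destruct (ex_series_partitions (Cmod v)) as [P HP]; [split; [apply Cmod_ge_0|exact hv]|].
  set (G := fun n i j =>
    Cpow t1 i * Cpow t2 j * part_wsum (pair_weight q1 q2 i j) n n * Cpow v n).
  assert (HG : forall n i j,
    (Cmod (G n i j) <= INR (part_count n n) * Cmod v ^ n * Cmod t1 ^ i * Cmod t2 ^ j)%R).
  { intros n i j. unfold G. rewrite !Cmod_mult, !Cmod_pow.
    pose proof (part_wsum_norm_le_count _ (Hz i j) n n).
    pose proof (pow_le (Cmod t1) i (Cmod_ge_0 t1)). pose proof (pow_le (Cmod t2) j (Cmod_ge_0 t2)).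
    pose proof (pow_le (Cmod v) n (Cmod_ge_0 v)).
    replace (INR (part_count n n) * Cmod v ^ n * Cmod t1 ^ i * Cmod t2 ^ j)%R
      with (Cmod t1 ^ i * Cmod t2 ^ j * INR (part_count n n) * Cmod v ^ n)%R by ring.
    apply Rmult_le_compat_r; [assumption|]. apply Rmult_le_compat_l; [|assumption].
    apply Rmult_le_pos; assumption. }
  unfold qavg. f_equal.
  rewrite (csum_ext _ (fun n => c0 * csum (fun i => csum (fun j => G n i j))) partitions_Bhat_mul).
  rewrite (csum_scal c0 _ _ (is_seriesC_swap3 G _ _ _ P _ _ HG HP (Hgeom t1 ht1) (Hgeom t2 ht2))).
  f_equal. apply csum_ext. intros i. apply csum_ext. intros j.
  apply csum_eq. eapply is_series_ext;
    [|apply (is_seriesC_scal_l (Cpow t1 i * Cpow t2 j)), (is_seriesC_part_gf _ v (Hz i j) hv)].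
  intros n. unfold G. retype_C; ring.
Qed.

Variable K : R.
Hypothesis HK : forall i j, (Cmod (pair_gf q1 q2 v i j) <= K)%R.

Let Hb1 : (0 <= Cmod t1 < 1)%R. Proof. split; [apply Cmod_ge_0|exact ht1]. Qed.
Let Hb2 : (0 <= Cmod t2 < 1)%R. Proof. split; [apply Cmod_ge_0|exact ht2]. Qed.

Lemma pair_terms_norm_le i j :
  (Cmod (Cpow t1 i * Cpow t2 j * pair_gf q1 q2 v i j) <= K * Cmod t1 ^ i * Cmod t2 ^ j)%R.
Proof.
  rewrite !Cmod_mult, !Cmod_pow.
  pose proof (pow_le (Cmod t1) i (Cmod_ge_0 t1)). pose proof (pow_le (Cmod t2) j (Cmod_ge_0 t2)).
  replace (K * Cmod t1 ^ i * Cmod t2 ^ j)%R with (Cmod t1 ^ i * Cmod t2 ^ j * K)%R by ring.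
  apply Rmult_le_compat_l; [apply Rmult_le_pos; assumption|apply HK].
Qed.

Lemma is_seriesC_pair_row_tail i :
  is_seriesC (fun k => Cpow t2 (k + i + 1) * pair_gf q1 q2 v i (k + i + 1))
    (csum (fun k => Cpow t2 (k + i + 1) * pair_gf q1 q2 v i (k + i + 1))).
Proof.
  apply (is_seriesC_geom_dominated _ (K * Cmod t2 ^ (i + 1)) (Cmod t2) Hb2). intros k.
  rewrite Cmod_mult, Cmod_pow, Rmult_assoc, <- pow_add, (Rmult_comm K).
  replace (i + 1 + k)%nat with (k + i + 1)%nat by lia.
  apply Rmult_le_compat_l; [apply pow_le, Cmod_ge_0|apply HK].
Qed.

Lemma pair_row_tail_eq i :
  qpoch_inf (v * q1 * q2) v * csum (fun k => Cpow t2 (k + i + 1) * pair_gf q1 q2 v i (k + i + 1)) =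
  qpoch (v * q1) v i / qpoch v v i * csum (fun k =>
    Cpow t2 (k + i + 1) * qpoch (v * q1 * q2) v (k + i + 1) / qpoch (v * q1) v (k + i + 1)).
Proof.
  rewrite <- (csum_scal _ _ _ (is_seriesC_pair_row_tail i)).
  apply csum_scal_inv; [apply qpoch_ratio_neq0; assumption| |].
  - intros k. rewrite Cmult_assoc, (Cmult_comm (qpoch_inf _ v)), <- Cmult_assoc.
    rewrite pair_gf_lt by (assumption || lia). field.
    split; [apply qpoch_mul_neq0; assumption|apply qpoch_neq0; lra].
  - eexists. apply is_seriesC_scal_l, is_seriesC_pair_row_tail.
Qed.

Lemma T1_eq :
  T1 q1 t1 q2 t2 v =
  qpoch_inf v v * csum_above_diag (fun i j => Cpow t1 i * Cpow t2 j * pair_gf q1 q2 v i j).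
Proof.
  assert (HQ := qpoch_inf_neq0 q1 q2 v hv hq1 hq2).
  set (X := fun i j => Cpow t1 i * Cpow t2 j * pair_gf q1 q2 v i j).
  assert (Hrow : forall i, qpoch_inf (v * q1 * q2) v * csum (fun k => X i (k + i + 1)%nat) =
    Cpow t1 i * qpoch (v * q1) v i / qpoch v v i * csum (fun k =>
      Cpow t2 (k + i + 1) * qpoch (v * q1 * q2) v (k + i + 1) / qpoch (v * q1) v (k + i + 1))).
  { intros i.
    rewrite (csum_ext _
      (fun k => Cpow t1 i * (Cpow t2 (k + i + 1) * pair_gf q1 q2 v i (k + i + 1))))
      by (intros; unfold X; ring).
    rewrite (csum_scal _ _ _ (is_seriesC_pair_row_tail i)).
    transitivity (Cpow t1 i * (qpoch_inf (v * q1 * q2) v *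
      csum (fun k => Cpow t2 (k + i + 1) * pair_gf q1 q2 v i (k + i + 1)))); [retype_C; ring|].
    rewrite pair_row_tail_eq. unfold Cdiv. ring. }
  unfold T1. rewrite <- (csum_ext _ _ Hrow).
  rewrite (csum_scal _ _ _ (is_seriesC_above_diag X K _ _ Hb1 Hb2 pair_terms_norm_le)).
  unfold csum_above_diag. retype_C. field. exact HQ.
Qed.

Lemma T3_eq :
  T3 q1 t1 q2 t2 v = qpoch_inf v v * csum (fun i => Cpow t1 i * Cpow t2 i * pair_gf q1 q2 v i i).
Proof.
  set (Q := qpoch_inf (v * q1 * q2) v).
  assert (HQ : Q <> 0) by (apply qpoch_inf_neq0; assumption).
  set (X := fun i j => Cpow t1 i * Cpow t2 j * pair_gf q1 q2 v i j).
  assert (E : Q * csum (fun i => X i i) =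
    csum (fun i => Cpow (t1 * t2) i * qpoch (v * q1 * q2) v i / qpoch v v i)).
  { rewrite <- (csum_scal Q _ _
      (is_seriesC_diag X K (Cmod t1) (Cmod t2) Hb1 Hb2 pair_terms_norm_le)).
    apply csum_ext. intros i. unfold X.
    transitivity (Cpow t1 i * Cpow t2 i * (Q * pair_gf q1 q2 v i i)); [ring|].
    unfold Q. rewrite pair_gf_diag, Cpow_mult_l by assumption. unfold Cdiv. ring. }
  unfold T3. fold Q. rewrite <- E. unfold X. field. exact HQ.
Qed.

End Average.

Lemma T2_eq q1 t1 q2 t2 v K :
  (Cmod v < 1)%R -> (Cmod t1 < 1)%R -> (Cmod t2 < 1)%R -> (Cmod q1 < 1)%R -> (Cmod q2 < 1)%R ->
  (forall i j, Cmod (pair_gf q1 q2 v i j) <= K)%R ->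
  T2 q1 t1 q2 t2 v =
  qpoch_inf v v * csum_above_diag (fun i j => Cpow t1 j * Cpow t2 i * pair_gf q1 q2 v j i).
Proof.
  intros hv ht1 ht2 hq1 hq2 HK.
  replace (T2 q1 t1 q2 t2 v) with (T1 q2 t2 q1 t1 v)
    by (unfold T1, T2; replace (v * q2 * q1) with (v * q1 * q2) by ring; reflexivity).
  rewrite (T1_eq q2 t2 q1 t1 v hv ht2 ht1 hq2 hq1 K) by (intros; rewrite pair_gf_comm; apply HK).
  f_equal. f_equal.
  apply functional_extensionality. intros i. apply functional_extensionality. intros j.
  rewrite pair_gf_comm. ring.
Qed.

Theorem lemma3p5 (q1 t1 q2 t2 v : C)
  (hv : (Cmod v < 1)%R) (ht1 : (Cmod t1 < 1)%R) (ht2 : (Cmod t2 < 1)%R)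
  (hq1 : (Cmod q1 < 1)%R) (hq2 : (Cmod q2 < 1)%R) :
  qavg (fun lam => Bhat lam q1 t1 * Bhat lam q2 t2) v =
  / (RtoC 1 - q1) * / (RtoC 1 - q2) *
    (T1 q1 t1 q2 t2 v + T2 q1 t1 q2 t2 v + T3 q1 t1 q2 t2 v).
Proof.
  destruct (pair_gf_norm_bounded q1 q2 v hv hq1 hq2) as [K HK].
  rewrite (qavg_Bhat_mul q1 t1 q2 t2 v hv ht1 ht2 hq1 hq2).
  rewrite (csum2_split_diag _ K (Cmod t1) (Cmod t2));
    [|split; [apply Cmod_ge_0|assumption]..|exact (pair_terms_norm_le q1 t1 q2 t2 v K HK)].
  rewrite (T1_eq q1 t1 q2 t2 v hv ht1 ht2 hq1 hq2 K HK),
    (T2_eq q1 t1 q2 t2 v K hv ht1 ht2 hq1 hq2 HK), (T3_eq q1 t1 q2 t2 v hv ht1 ht2 hq1 hq2 K HK).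
  ring.
Qed.
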